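(* Let $q$ be a power of $2$. In $\mathrm{AG}(3,q^2)\subset\mathrm{PG}(3,q^2)$, with affine coordinates $x,y,z$, homogeneous coordinates $J,X,Y,Z$ and plane at infinity $\Sigma_\infty: J=0$, let $\mathcal H$ be the Hermitian surface with affine equation $z^q+z=x^{q+1}+y^{q+1}$ and let $\mathcal Q$ be an irreducible quadric with affine equation $z=ax^2+by^2+cxy+dx+ey+f$, where $a,b,c,d,e,f\in\mathrm{GF}(q^2)$. Let $\mathcal C_\infty=\mathcal Q\cap\mathcal H\cap\Sigma_\infty$. If $\mathcal Q$ is a quadratic cone, then $\mathcal C_\infty$ consists either of $1$ point or of $q^2+1$ points on a line. If $\mathcal Q$ is a hyperbolic quadric, then $\mathcal C_\infty$ consists either of $1$ point, or of $q^2+1$ points on a line, or of $2q^2+1$ points on two lines. All these cases actually occur.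
   Context: Here $P_\infty=(0,0,0,1)$ lies on both $\mathcal H$ and $\mathcal Q$, and $\Sigma_\infty$ is the common tangent plane of $\mathcal H$ and $\mathcal Q$ at $P_\infty$. A quadratic cone is the quadric projecting an irreducible conic in a plane from a vertex not on that plane. *)

From HB Require Import structures.
From mathcomp Require Import all_boot all_order all_algebra.
Set Implicit Arguments. Unset Strict Implicit. Unset Printing Implicit Defensive.
Import Order.TTheory GRing.Theory Num.Theory.
Local Open Scope ring_scope.

(* Points of PG(3,F) are represented by row vectors (J,X,Y,Z) in 'rV[F]_4,
   normalized so that the first nonzero coordinate equals 1.
   Coordinate indices: 0 = J, 1 = X, 2 = Y, 3 = Z. *)

Section Defs.
Variable F : fieldType.

Definition crd n (v : 'rV[F]_n.+1) (k : nat) : F := v ord0 (inord k).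

Definition pnormal n (v : 'rV[F]_n) : bool :=
  [exists i : 'I_n, (v ord0 i == 1) && [forall j : 'I_n, (j < i)%N ==> (v ord0 j == 0)]].

Definition hermF (q : nat) (v : 'rV[F]_4) : F :=
  crd v 3 ^+ q * crd v 0 + crd v 3 * crd v 0 ^+ q
  - crd v 1 ^+ q.+1 - crd v 2 ^+ q.+1.

(* homogeneous form of the quadric z = a x^2 + b y^2 + c x y + d x + e y + f:
   a X^2 + b Y^2 + c X Y + d X J + e Y J + f J^2 - Z J *)
Definition quadF (a b c d e f : F) (v : 'rV[F]_4) : F :=
  a * crd v 1 ^+ 2 + b * crd v 2 ^+ 2 + c * crd v 1 * crd v 2
  + d * crd v 1 * crd v 0 + e * crd v 2 * crd v 0 + f * crd v 0 ^+ 2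
  - crd v 3 * crd v 0.

Definition linF (l v : 'rV[F]_4) : F := \sum_(i < 4) l ord0 i * v ord0 i.

Definition irreducible_quadric (Q : 'rV[F]_4 -> F) : Prop :=
  ~ exists l1 l2 : 'rV[F]_4, forall v, Q v = linF l1 v * linF l2 v.

Definition hyperbolic_quadric (Q : 'rV[F]_4 -> F) : Prop :=
  exists (M : 'M[F]_4) (lam : F), M \in unitmx /\ lam != 0 /\
    forall v : 'rV[F]_4,
      Q (v *m M) = lam * (crd v 0 * crd v 1 + crd v 2 * crd v 3).

Definition irreducible_conic (G : 'rV[F]_3 -> F) : Prop :=
  exists (N : 'M[F]_3) (mu : F), N \in unitmx /\ mu != 0 /\
    forall w : 'rV[F]_3, G (w *m N) = mu * (crd w 0 * crd w 1 + crd w 2 ^+ 2).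

(* quadratic cone: in suitable projective coordinates v (point v *m M), the
   vertex is e_3 *m M and the form only depends on the coordinates of the
   plane v_3 = 0, where it defines an irreducible conic *)
Definition quadratic_cone (Q : 'rV[F]_4 -> F) : Prop :=
  exists (M : 'M[F]_4) (G : 'rV[F]_3 -> F), M \in unitmx /\ irreducible_conic G /\
    forall v : 'rV[F]_4,
      Q (v *m M) = G (\row_(j < 3) v ord0 (widen_ord (leqnSn 3) j)).

Definition is_line (L : 'M[F]_(2,4)) : Prop := \rank L = 2%N.
End Defs.

Definition Cinf (F' : finFieldType) (q : nat) (a b c d e f : F') : {set 'rV[F']_4} :=
  [set v : 'rV[F']_4 | [&& pnormal v, crd v 0 == 0, hermF q v == 0
                        & quadF a b c d e f v == 0]].


Definition one_point (F : finFieldType) (S : {set 'rV[F]_4}) : Prop := #|S| = 1%N.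

Definition points_on_one_line (F : finFieldType) (q : nat) (S : {set 'rV[F]_4}) : Prop :=
  #|S| = (q ^ 2 + 1)%N /\
  exists L : 'M[F]_(2,4), is_line L /\ forall v, v \in S -> (v <= L)%MS.

Definition points_on_two_lines (F : finFieldType) (q : nat) (S : {set 'rV[F]_4}) : Prop :=
  #|S| = (2 * q ^ 2 + 1)%N /\
  exists L1 L2 : 'M[F]_(2,4), [/\ is_line L1, is_line L2, ~~ (L1 == L2)%MS &
    forall v, v \in S -> (v <= L1)%MS \/ (v <= L2)%MS].

From HB Require Import structures.
From mathcomp Require Import all_boot all_order all_algebra all_field.
From mathcomp Require Import ring zify.
Import Order.TTheory GRing.Theory Num.Theory.
Set Implicit Arguments. Unset Strict Implicit. Unset Printing Implicit Defensive.
Local Open Scope ring_scope.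

(* On the plane at infinity J = 0 the Hermitian surface becomes X^(q+1) + Y^(q+1) = 0,
   which meets the line X = J = 0 only in P_inf = (0,0,0,1), and the quadric becomes
   a X^2 + b Y^2 + c X Y. Hence C_inf is P_inf together with the lines joining P_inf to the
   points (0,1,m,0) whose slope m is a common root of a + b m^2 + c m and 1 + m^(q+1); each
   such line contributes q^2 further points. Irreducibility forces (a,b,c) <> 0, so there
   are at most two slopes. The vertex of a cone is a singular point of the quadric, which
   in characteristic 2 forces c = 0, and then a + b m^2 has at most one root. All cases are
   realized by quadrics z = (p1 x + p2 y)(r1 x + r2 y), whose slopes are the roots of the
   two factors with m^(q+1) = -1. *)

Section Coordinates.
Variable F : fieldType.

Definition row4 (j x y z : F) : 'rV[F]_4 := \row_(i < 4) [:: j; x; y; z]`_i.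

Lemma row4E j x y z (k : 'I_4) : row4 j x y z ord0 k = [:: j; x; y; z]`_k.
Proof. by rewrite mxE. Qed.

Lemma crd_row4 j x y z (k : nat) : (k < 4)%N -> crd (row4 j x y z) k = [:: j; x; y; z]`_k.
Proof. by move=> k_lt4; rewrite /crd row4E inordK. Qed.

Lemma crd_ord (v : 'rV[F]_4) (k : 'I_4) : v ord0 k = crd v k.
Proof. by rewrite /crd inord_val. Qed.

Lemma row4_eta (v : 'rV[F]_4) : v = row4 (crd v 0) (crd v 1) (crd v 2) (crd v 3).
Proof. by apply/rowP => -[[|[|[|[|k]]]] k_lt4]; rewrite row4E crd_ord. Qed.

Lemma row4_inj j x y z j' x' y' z' :
  row4 j x y z = row4 j' x' y' z' -> [/\ j = j', x = x', y = y' & z = z'].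
Proof.
move=> E; have crdE k : crd (row4 j x y z) k = crd (row4 j' x' y' z') k by rewrite E.
by split; [have := crdE 0%N | have := crdE 1%N | have := crdE 2%N | have := crdE 3%N];
  rewrite !crd_row4.
Qed.

Lemma row4D j x y z j' x' y' z' :
  row4 j x y z + row4 j' x' y' z' = row4 (j + j') (x + x') (y + y') (z + z').
Proof. by apply/rowP => -[[|[|[|[|k]]]] k_lt4]; rewrite !mxE. Qed.

Lemma row4Z (k j x y z : F) : k *: row4 j x y z = row4 (k * j) (k * x) (k * y) (k * z).
Proof. by apply/rowP => -[[|[|[|[|i]]]] i_lt4]; rewrite !mxE. Qed.

Definition Pinf : 'rV[F]_4 := row4 0 0 0 1.
Definition inf_pt (mz : F * F) : 'rV[F]_4 := row4 0 1 mz.1 mz.2.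

Lemma pnormal_infinity (v : 'rV[F]_4) : pnormal v -> crd v 0 = 0 ->
  [\/ exists mz, v = inf_pt mz, exists z, v = row4 0 0 1 z | v = Pinf].
Proof.
case/existsP=> i /andP[/eqP vi /forallP v_lt_i] v0.
have crd_lt_i k : (k < i)%N -> (k < 4)%N -> crd v k = 0.
  move=> k_lt_i k_lt4; have /implyP := v_lt_i (Ordinal k_lt4).
  by rewrite crd_ord => /(_ k_lt_i)/eqP.
rewrite crd_ord in vi; rewrite (row4_eta v) v0.
case: i vi crd_lt_i {v_lt_i} => [[|[|[|[|k]]]] i_lt4] //= vi crd_lt_i.
- by move: vi; rewrite v0 => /esym/eqP; rewrite oner_eq0.
- by constructor 1; exists (crd v 2, crd v 3); rewrite vi.
- by constructor 2; exists (crd v 3); rewrite vi crd_lt_i.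
- by constructor 3; rewrite vi !crd_lt_i.
Qed.

Lemma pnormal_Pinf : pnormal Pinf.
Proof.
rewrite /Pinf; apply/existsP; exists (inord 3); rewrite row4E inordK //= eqxx.
by apply/forallP => -[[|[|[|[|k]]]] k_lt4]; rewrite row4E //= ?eqxx.
Qed.

Lemma pnormal_inf_pt mz : pnormal (inf_pt mz).
Proof.
rewrite /inf_pt; apply/existsP; exists (inord 1); rewrite row4E inordK //= eqxx.
by apply/forallP => -[[|[|[|[|k]]]] k_lt4]; rewrite row4E //= ?eqxx.
Qed.

Lemma hermF_row4 q (j x y z : F) :
  hermF q (row4 j x y z) = z ^+ q * j + z * j ^+ q - x ^+ q.+1 - y ^+ q.+1.
Proof. by rewrite /hermF !crd_row4. Qed.

Lemma quadF_row4 a b c d e f (j x y z : F) :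
  quadF a b c d e f (row4 j x y z) =
  a * x ^+ 2 + b * y ^+ 2 + c * x * y + d * x * j + e * y * j + f * j ^+ 2 - z * j.
Proof. by rewrite /quadF !crd_row4. Qed.

Lemma linF_row4 (l0 l1 l2 l3 j x y z : F) :
  linF (row4 l0 l1 l2 l3) (row4 j x y z) = l0 * j + l1 * x + l2 * y + l3 * z.
Proof. by rewrite /linF !big_ord_recr big_ord0 /= !row4E /= add0r. Qed.

Lemma hermF_infinity q (x y z : F) : (0 < q)%N ->
  hermF q (row4 0 x y z) = - (x ^+ q.+1 + y ^+ q.+1).
Proof. by move=> q_gt0; rewrite hermF_row4 expr0n eqn0Ngt q_gt0 /=; ring. Qed.

Lemma quadF_infinity a b c d e f (x y z : F) :
  quadF a b c d e f (row4 0 x y z) = a * x ^+ 2 + b * y ^+ 2 + c * x * y.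
Proof. by rewrite quadF_row4; ring. Qed.

End Coordinates.

Arguments Pinf {F}.

Section PlaneAtInfinity.
Variables (F : finFieldType) (q : nat).
Hypothesis q_gt0 : (0 < q)%N.

Definition slopes (a b c : F) : {set F} :=
  [set m | (a + b * m ^+ 2 + c * m == 0) && (1 + m ^+ q.+1 == 0)].

Lemma Cinf_eq a b c d e f :
  Cinf q a b c d e f = Pinf |: [set inf_pt mz | mz in setX (slopes a b c) setT].
Proof.
apply/setP => v; rewrite !inE; apply/idP/idP.
- case/and4P=> v_pn /eqP v0 /eqP Hv /eqP Qv.
  have [[[m z] v_eq]|[z v_eq]|->] := pnormal_infinity v_pn v0; last by rewrite eqxx.
  + apply/orP; right; apply/imsetP; exists (m, z) => //; rewrite !inE andbT /=.
    move/eqP: Hv; move/eqP: Qv; rewrite v_eq /inf_pt /= hermF_infinity // quadF_infinity.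
    by rewrite oppr_eq0 !expr1n !mulr1 => -> ->.
  + move/eqP: Hv; rewrite v_eq hermF_infinity // expr0n expr1n add0r.
    by rewrite oppr_eq0 oner_eq0.
- case/orP => [/eqP -> | /imsetP [[m z]]].
    rewrite pnormal_Pinf /Pinf crd_row4 // hermF_infinity // quadF_infinity !expr0n /=.
    by rewrite !(mulr0, addr0, oppr0, eqxx).
  rewrite !inE andbT /= => /andP [/eqP Qm /eqP Hm] ->.
  rewrite pnormal_inf_pt /inf_pt /= crd_row4 // hermF_infinity // quadF_infinity !expr1n !mulr1.
  by rewrite Hm oppr0 Qm !eqxx.
Qed.

Lemma inf_pt_inj : injective (@inf_pt F).
Proof. by move=> [m z] [m' z'] /row4_inj [_ _ /= -> ->]. Qed.

Lemma card_Cinf a b c d e f : #|F| = (q ^ 2)%N ->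
  #|Cinf q a b c d e f| = (1 + #|slopes a b c| * q ^ 2)%N.
Proof.
move=> cardF; rewrite Cinf_eq cardsU1 card_imset; last exact: inf_pt_inj.
rewrite cardsX cardsT cardF; congr (_ + _)%N; apply/eqP; rewrite eqb1.
by apply/imsetP => -[[m z] _ /row4_inj [_ /eqP]]; rewrite eq_sym oner_eq0.
Qed.

Lemma mem_Cinf a b c d e f v : v \in Cinf q a b c d e f ->
  v = Pinf \/ exists m z, m \in slopes a b c /\ v = inf_pt (m, z).
Proof.
rewrite Cinf_eq !inE => /orP [/eqP ->| /imsetP [[m z]]]; first by left.
by rewrite inE => /andP [m_slope _] ->; right; exists m, z.
Qed.

End PlaneAtInfinity.

Section Lines.
Variable F : fieldType.

Definition slope_line (m : F) : 'M[F]_(2, 4) := col_mx (row4 0 1 m 0) (row4 0 0 0 1).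

Lemma sub_slope_lineP m v :
  reflect (exists x z, v = row4 0 x (x * m) z) (v <= slope_line m)%MS.
Proof.
apply: (iffP submxP) => [[D ->] | [x [z ->]]].
  have [Dl [Dr ->]] : exists Dl Dr : 'M_1, D = row_mx Dl Dr.
    by exists (lsubmx (D : 'M_(1, 1 + 1))), (rsubmx (D : 'M_(1, 1 + 1))); rewrite hsubmxK.
  rewrite /slope_line (@mul_row_col _ 1 1 1 4) [Dl]mx11_scalar [Dr]mx11_scalar.
  by exists (Dl 0 0), (Dr 0 0); rewrite !mul_scalar_mx !row4Z row4D !(mulr0, mulr1, addr0, add0r).
exists (row_mx x%:M z%:M); rewrite /slope_line (@mul_row_col _ 1 1 1 4) !mul_scalar_mx !row4Z row4D.
by rewrite !(mulr0, mulr1, addr0, add0r).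
Qed.

Lemma slope_line_is_line m : is_line (slope_line m).
Proof.
apply/eqP/row_freeP.
exists (\matrix_(i < 4, j < 2) (((i == 1 :> nat) && (j == 0 :> nat))
                              || ((i == 3 :> nat) && (j == 1 :> nat)))%:R).
rewrite (@mul_col_mx _ 1 1 4 2); apply/matrixP => i j.
case: (@split_ordP 1 1 i) => i0 ->; rewrite (ord1 i0) ?(@col_mxEu _ 1 1) ?(@col_mxEd _ 1 1).
all: by rewrite !mxE !big_ord_recr big_ord0 /= !mxE; case: j => [[|[|j]] ?] //=; ring.
Qed.

Lemma slope_line_neq m1 m2 : m1 != m2 -> ~~ (slope_line m1 == slope_line m2)%MS.
Proof.
move=> m12; apply: contraNN m12 => /andP [le12 _].
have /sub_slope_lineP [x [z /row4_inj [_ <- m1E _]]] : (row4 0 1 m1 0 <= slope_line m2)%MS.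
  by apply: submx_trans le12; apply/sub_slope_lineP; exists 1, 0; rewrite mul1r.
by rewrite m1E mul1r eqxx.
Qed.

Lemma Pinf_sub_slope_line m : (Pinf <= slope_line m)%MS.
Proof. by apply/sub_slope_lineP; exists 0, 1; rewrite mul0r. Qed.

Lemma inf_pt_sub_slope_line m z : (inf_pt (m, z) <= slope_line m)%MS.
Proof. by apply/sub_slope_lineP; exists 1, z; rewrite mul1r. Qed.

End Lines.

Section Shapes.
Variables (F : finFieldType) (q : nat) (a b c d e f : F).
Hypotheses (q_gt0 : (0 < q)%N) (cardF : #|F| = (q ^ 2)%N).

Lemma Cinf_one_point : slopes q a b c = set0 -> one_point (Cinf q a b c d e f).
Proof. by move=> no_slope; rewrite /one_point card_Cinf // no_slope cards0. Qed.

Lemma Cinf_one_line m : slopes q a b c = [set m] -> points_on_one_line q (Cinf q a b c d e f).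
Proof.
move=> slopesE; split; first by rewrite card_Cinf // slopesE cards1 mul1n addnC.
exists (slope_line m); split=> [|v /(mem_Cinf q_gt0) [->|[m' [z []]]]].
- exact: slope_line_is_line.
- exact: Pinf_sub_slope_line.
by rewrite slopesE inE => /eqP -> ->; apply: inf_pt_sub_slope_line.
Qed.

Lemma Cinf_two_lines m1 m2 : m1 != m2 -> slopes q a b c = [set m1; m2] ->
  points_on_two_lines q (Cinf q a b c d e f).
Proof.
move=> m12 slopesE; split; first by rewrite card_Cinf // slopesE cards2 m12 addnC mulnC.
exists (slope_line m1), (slope_line m2); split; try exact: slope_line_is_line.
  exact: slope_line_neq.
move=> v /(mem_Cinf q_gt0) [->|[m [z []]]]; first by left; apply: Pinf_sub_slope_line.
by rewrite slopesE !inE => /orP [] /eqP -> ->; [left | right]; apply: inf_pt_sub_slope_line.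
Qed.

Lemma Cinf_card_slopes_le1 : (#|slopes q a b c| <= 1)%N ->
  one_point (Cinf q a b c d e f) \/ points_on_one_line q (Cinf q a b c d e f).
Proof.
rewrite leq_eqVlt ltnS leqn0 => /orP [/cards1P [m /Cinf_one_line] | /eqP/cards0_eq].
  by right.
by left; apply: Cinf_one_point.
Qed.

Lemma Cinf_card_slopes_le2 : (#|slopes q a b c| <= 2)%N ->
  [\/ one_point (Cinf q a b c d e f), points_on_one_line q (Cinf q a b c d e f)
    | points_on_two_lines q (Cinf q a b c d e f)].
Proof.
rewrite leq_eqVlt => /orP [/cards2P [m1 [m2 [m12 /(Cinf_two_lines m12)]]] | /Cinf_card_slopes_le1].
  by constructor 3.
by case; [constructor 1 | constructor 2].
Qed.

End Shapes.

Section Polar.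
Variable F : fieldType.

Definition polar (Q : 'rV[F]_4 -> F) (u w : 'rV[F]_4) : F := Q (u + w) - Q u - Q w.

Lemma linFD (l u w : 'rV[F]_4) : linF l (u + w) = linF l u + linF l w.
Proof. by rewrite /linF -big_split; apply: eq_bigr => i _; rewrite mxE mulrDr. Qed.

Lemma polar_linF_mul (l1 l2 u w : 'rV[F]_4) :
  polar (fun v => linF l1 v * linF l2 v) u w = linF l1 u * linF l2 w + linF l1 w * linF l2 u.
Proof. by rewrite /polar !linFD; ring. Qed.

Lemma polar_quadF a b c d e f u0 u1 u2 u3 w0 w1 w2 w3 :
  polar (quadF a b c d e f) (row4 u0 u1 u2 u3) (row4 w0 w1 w2 w3) =
  2 * (a * u1 * w1 + b * u2 * w2 + f * u0 * w0) + c * (u1 * w2 + u2 * w1)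
  + d * (u1 * w0 + u0 * w1) + e * (u2 * w0 + u0 * w2) - (u3 * w0 + u0 * w3).
Proof. by rewrite /polar row4D !quadF_row4; ring. Qed.

Lemma quadF0 (a b c d e f : F) : quadF a b c d e f 0 = 0.
Proof. by rewrite /quadF /crd !mxE; ring. Qed.

End Polar.

Section Irreducible.
Variable F : fieldType.

Lemma reducible_quadF_linear (d e f : F) : ~ irreducible_quadric (quadF 0 0 0 d e f).
Proof.
by apply; exists (row4 1 0 0 0), (row4 f d e (-1)) => v;
  rewrite [v]row4_eta quadF_row4 !linF_row4; ring.
Qed.

Lemma irreducible_quadF_abc (a b c d e f : F) : irreducible_quadric (quadF a b c d e f) ->
  (a != 0) || (b != 0) || (c != 0).
Proof.
apply: contraPT; rewrite !negb_or !negbK => /andP [/andP [/eqP -> /eqP ->] /eqP ->].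
exact: reducible_quadF_linear.
Qed.

(* One factor vanishes at Pinf (there is no Z^2 term); polarizing against Pinf
   shows that it is proportional to J, so there are no terms in X^2, Y^2, XY. *)
Lemma irreducible_quadF (a b c d e f : F) : (a != 0) || (b != 0) || (c != 0) ->
  irreducible_quadric (quadF a b c d e f).
Proof.
move=> abc_neq0 [l1 [l2 Qprod]].
have polarQ u w : polar (quadF a b c d e f) u w = linF l1 u * linF l2 w + linF l1 w * linF l2 u.
  by rewrite -polar_linF_mul /polar !Qprod.
wlog p3_0 : l1 l2 Qprod polarQ / linF l1 Pinf = 0.
  move=> wlog_p3; have: quadF a b c d e f Pinf = 0 by rewrite quadF_row4; ring.
  rewrite Qprod => /eqP; rewrite mulf_eq0 => /orP [/eqP|/eqP p3_0]; first exact: wlog_p3.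
  by apply: (wlog_p3 l2 l1 _ _ p3_0) => [v|u w]; rewrite ?Qprod ?polarQ; ring.
have l1_Pinf u0 u1 u2 : linF l1 (row4 u0 u1 u2 0) * linF l2 Pinf = - u0.
  rewrite -[RHS](_ : polar (quadF a b c d e f) (row4 u0 u1 u2 0) Pinf = - u0).
    by rewrite polarQ p3_0 mul0r addr0.
  by rewrite polar_quadF; ring.
have r3_neq0 : linF l2 Pinf != 0.
  apply/eqP => r3_0; have := l1_Pinf 1 0 0.
  by rewrite r3_0 mulr0 => /eqP; rewrite eq_sym oppr_eq0 oner_eq0.
have l1_XY x y : linF l1 (row4 0 x y 0) = 0.
  by have /eqP := l1_Pinf 0 x y; rewrite oppr0 mulf_eq0 (negbTE r3_neq0) orbF => /eqP.
have a0 : a = 0 by have := Qprod (row4 0 1 0 0); rewrite l1_XY mul0r quadF_row4 => <-; ring.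
have b0 : b = 0 by have := Qprod (row4 0 0 1 0); rewrite l1_XY mul0r quadF_row4 => <-; ring.
have c0 : c = 0.
  have := polarQ (row4 0 1 0 0) (row4 0 0 1 0).
  by rewrite !l1_XY !mul0r addr0 polar_quadF => <-; ring.
by move: abc_neq0; rewrite a0 b0 c0 eqxx.
Qed.

End Irreducible.

Section Cone.
Variable F : fieldType.
Hypothesis two0 : (2 : F) = 0.

(* The vertex w of the cone satisfies Q(v + w) = Q(v), so w is in the radical of
   the polar form; in characteristic 2 that radical is trivial unless c = 0. *)
Lemma quadratic_cone_c0 (a b c d e f : F) : quadratic_cone (quadF a b c d e f) -> c = 0.
Proof.
case=> M [G [M_unit [_ QG]]]; set Q := quadF a b c d e f in QG *.
set w := Pinf *m M.
have Q_vertex v : Q (v + w) = Q v.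
  rewrite -[v](mulmxKV M_unit) -mulmxDl !QG; congr G.
  by apply/rowP => -[[|[|[|j]]] ?]; rewrite !mxE //= addr0.
have polar_w v : polar Q v w = 0.
  have Qw : Q w = 0 by rewrite -[w]add0r Q_vertex /Q quadF0.
  by rewrite /polar Q_vertex Qw !subrr.
have [w0 [w1 [w2 [w3 wE]]]] : exists w0 w1 w2 w3, w = row4 w0 w1 w2 w3.
  by exists (crd w 0), (crd w 1), (crd w 2), (crd w 3); apply: row4_eta.
rewrite wE in polar_w.
have w0_0 : w0 = 0 by rewrite -oppr0 -(polar_w (row4 0 0 0 1)) polar_quadF two0; ring.
have cw2 : c * w2 = 0 by rewrite -(polar_w (row4 0 1 0 0)) polar_quadF two0 w0_0; ring.
have cw1 : c * w1 = 0 by rewrite -(polar_w (row4 0 0 1 0)) polar_quadF two0 w0_0; ring.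
have /eqP : d * w1 + e * w2 - w3 = 0.
  by rewrite -(polar_w (row4 1 0 0 0)) polar_quadF two0 w0_0; ring.
rewrite subr_eq0 => /eqP w3E.
apply/eqP; apply: contraT => c_neq0.
have [w1_0 w2_0] : w1 = 0 /\ w2 = 0.
  by move/eqP: cw1; move/eqP: cw2; rewrite !mulf_eq0 (negbTE c_neq0) => /eqP -> /eqP.
have w_0 : w = 0.
  rewrite wE -w3E w0_0 w1_0 w2_0 !mulr0 addr0.
  by apply/rowP => -[[|[|[|[|k]]]] ?]; rewrite !mxE.
have := mulmxK M_unit Pinf; rewrite -/w w_0 mul0mx => /rowP/(_ ord_max).
by rewrite mxE row4E /= => /eqP; rewrite eq_sym oner_eq0.
Qed.

End Cone.

Section QuadraticRoots.
Variable F : fieldType.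

Lemma quadratic_three_roots (a b c x y z : F) :
  a + b * x ^+ 2 + c * x = 0 -> a + b * y ^+ 2 + c * y = 0 -> a + b * z ^+ 2 + c * z = 0 ->
  [/\ x != y, x != z & y != z] -> [/\ a = 0, b = 0 & c = 0].
Proof.
move=> rx ry rz [xy xz yz].
have chord u v : u != v -> a + b * u ^+ 2 + c * u = 0 -> a + b * v ^+ 2 + c * v = 0 ->
    c + b * (u + v) = 0.
  move=> uv ru rv.
  have E : (u - v) * (c + b * (u + v)) = (a + b * u ^+ 2 + c * u) - (a + b * v ^+ 2 + c * v).
    by ring.
  by move/eqP: E; rewrite ru rv subrr mulf_eq0 subr_eq0 (negbTE uv) => /eqP.
have cxy := chord _ _ xy rx ry; have cxz := chord _ _ xz rx rz.
have b0 : b = 0.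
  have E : b * (y - z) = (c + b * (x + y)) - (c + b * (x + z)) by ring.
  by move/eqP: E; rewrite cxy cxz subrr mulf_eq0 subr_eq0 (negbTE yz) orbF => /eqP.
have c0 : c = 0 by rewrite -cxy b0 mul0r addr0.
by split=> //; rewrite -rx b0 c0; ring.
Qed.

Lemma char2_quadratic_two_roots (a b x y : F) : (2 : F) = 0 ->
  a + b * x ^+ 2 = 0 -> a + b * y ^+ 2 = 0 -> x != y -> a = 0 /\ b = 0.
Proof.
move=> two0 rx ry xy.
have E : b * (x - y) ^+ 2 = (a + b * x ^+ 2) - (a + b * y ^+ 2) - 2 * (b * y * (x - y)) by ring.
move/eqP: E; rewrite rx ry two0 subrr mul0r subr0 mulf_eq0 expf_eq0 subr_eq0 (negbTE xy) orbF.
by move=> /eqP b0; split=> //; rewrite -rx b0 mul0r addr0.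
Qed.

End QuadraticRoots.

Section SlopeBounds.
Variables (F : finFieldType) (q : nat).

Lemma slope_root (a b c m : F) : m \in slopes q a b c -> a + b * m ^+ 2 + c * m = 0.
Proof. by rewrite inE => /andP [/eqP]. Qed.

Lemma card_slopes_le2 (a b c : F) : (a != 0) || (b != 0) || (c != 0) ->
  (#|slopes q a b c| <= 2)%N.
Proof.
move=> abc_neq0; rewrite leqNgt; apply/card_gt2P => -[x [y [z [[sx sy sz] [xy yz zx]]]]].
have [|a0 b0 c0] := quadratic_three_roots (slope_root sx) (slope_root sy) (slope_root sz).
  by split=> //; rewrite eq_sym.
by move: abc_neq0; rewrite a0 b0 c0 eqxx.
Qed.

Lemma card_slopes_char2_le1 (a b : F) : (2 : F) = 0 -> (a != 0) || (b != 0) ->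
  (#|slopes q a b 0%R| <= 1)%N.
Proof.
move=> two0 ab_neq0; apply/card_le1_eqP => x y sx sy; apply/eqP; apply: contraT => xy.
have root m : m \in slopes q a b 0%R -> a + b * m ^+ 2 = 0.
  by move/slope_root; rewrite mul0r addr0.
have [a0 b0] := char2_quadratic_two_roots two0 (root _ sy) (root _ sx) xy.
by move: ab_neq0; rewrite a0 b0 eqxx.
Qed.

End SlopeBounds.

Section Classification.
Variables (F : finFieldType) (q : nat) (a b c d e f : F).
Hypotheses (q_gt0 : (0 < q)%N) (cardF : #|F| = (q ^ 2)%N) (two0 : (2 : F) = 0).
Hypothesis irr : irreducible_quadric (quadF a b c d e f).

Lemma Cinf_quadratic_cone : quadratic_cone (quadF a b c d e f) ->
  one_point (Cinf q a b c d e f) \/ points_on_one_line q (Cinf q a b c d e f).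
Proof.
move=> cone; have c0 := quadratic_cone_c0 two0 cone.
have := irreducible_quadF_abc irr; rewrite c0 eqxx orbF => ab_neq0.
by apply: Cinf_card_slopes_le1 => //; apply: card_slopes_char2_le1.
Qed.

Lemma Cinf_irreducible_quadric :
  [\/ one_point (Cinf q a b c d e f), points_on_one_line q (Cinf q a b c d e f)
    | points_on_two_lines q (Cinf q a b c d e f)].
Proof.
by apply: Cinf_card_slopes_le2 => //; apply: card_slopes_le2; apply: irreducible_quadF_abc irr.
Qed.

End Classification.

Section Witnesses.
Variable F : fieldType.

Definition mx4 (r0 r1 r2 r3 : 'rV[F]_4) : 'M[F]_4 :=
  \matrix_(i < 4, j < 4) [:: r0; r1; r2; r3]`_i ord0 j.

Lemma mul_row_mx4 (v : 'rV[F]_4) r0 r1 r2 r3 :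
  v *m mx4 r0 r1 r2 r3 = crd v 0 *: r0 + crd v 1 *: r1 + crd v 2 *: r2 + crd v 3 *: r3.
Proof. by apply/rowP => k; rewrite !mxE !big_ord_recr big_ord0 /= !mxE !crd_ord add0r. Qed.

Lemma mul_mx4 r0 r1 r2 r3 (N : 'M[F]_4) :
  mx4 r0 r1 r2 r3 *m N = mx4 (r0 *m N) (r1 *m N) (r2 *m N) (r3 *m N).
Proof.
apply/matrixP => i j; rewrite !mxE.
by case: i => [[|[|[|[|i]]]] ?] //=; rewrite mxE; apply: eq_bigr => k _; rewrite mxE.
Qed.

Lemma mx4_1 : mx4 (row4 1 0 0 0) (row4 0 1 0 0) (row4 0 0 1 0) (row4 0 0 0 1) = 1%:M.
Proof.
by apply/matrixP => -[[|[|[|[|i]]]] ?] [[|[|[|[|j]]]] ?]; rewrite !mxE.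
Qed.

Lemma crd_widen (v : 'rV[F]_4) k : (k < 3)%N ->
  crd (\row_(j < 3) v ord0 (widen_ord (leqnSn 3) j)) k = crd v k.
Proof.
move=> k_lt3; rewrite /crd mxE; congr (v ord0 _); apply/val_inj.
by rewrite /= !inordK // (leq_trans k_lt3).
Qed.

Lemma quadratic_cone_square (l : F) :
  quadratic_cone (quadF (l * l) (1 * 1) (l * 1 + 1 * l) 0 0 0).
Proof.
exists (mx4 (row4 1 0 0 0) (row4 0 0 0 (-1)) (row4 0 0 1 0) (row4 0 1 (- l) 0)).
exists (fun w => crd w 0 * crd w 1 + crd w 2 ^+ 2); split; [|split].
- pose N := mx4 (row4 1 0 0 0) (row4 0 0 l 1) (row4 0 0 1 0) (row4 0 (-1) 0 0).
  apply: (proj1 (@mulmx1_unit _ _ _ N _)).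
  rewrite mul_mx4 !mul_row_mx4 !crd_row4 //= !row4Z !row4D -mx4_1.
  by congr (mx4 (row4 _ _ _ _) (row4 _ _ _ _) (row4 _ _ _ _) (row4 _ _ _ _)); ring.
- exists 1%:M, 1; split; first exact: unitmx1.
  by split=> [|w]; [exact: oner_neq0 | rewrite mulmx1 mul1r].
- by move=> v; rewrite mul_row_mx4 !row4Z !row4D quadF_row4 !crd_widen //; ring.
Qed.

Lemma hyperbolic_quadric_product (p1 p2 r1 r2 : F) : p1 * r2 - p2 * r1 != 0 ->
  hyperbolic_quadric (quadF (p1 * r1) (p2 * r2) (p1 * r2 + p2 * r1) 0 0 0).
Proof.
set D := p1 * r2 - p2 * r1 => D_neq0.
exists (mx4 (row4 1 0 0 0) (row4 0 0 0 (-1)) (row4 0 (r2 / D) (- (r1 / D)) 0)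
            (row4 0 (- (p2 / D)) (p1 / D) 0)), 1.
split; [|split=> [|v]].
- pose N := mx4 (row4 1 0 0 0) (row4 0 0 p1 r1) (row4 0 0 p2 r2) (row4 0 (-1) 0 0).
  apply: (proj1 (@mulmx1_unit _ _ _ N _)).
  rewrite mul_mx4 !mul_row_mx4 !crd_row4 //= !row4Z !row4D -mx4_1.
  by congr (mx4 (row4 _ _ _ _) (row4 _ _ _ _) (row4 _ _ _ _) (row4 _ _ _ _)); rewrite /D; field.
- exact: oner_neq0.
- by rewrite mul_row_mx4 !row4Z !row4D quadF_row4 /D; field.
Qed.

End Witnesses.

Lemma exists_nonroot_Xn_sub1 (F : finFieldType) n : (0 < n)%N -> (n < #|F|.-1)%N ->
  exists2 y : F, y != 0 & y ^+ n != 1.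
Proof.
move=> n_gt0 n_lt; apply/exists_inP; apply: contraTT n_lt; rewrite negb_exists_in -leqNgt.
move=> /forall_inP all_roots.
have roots : all (root ('X^n - 1)) (enum [pred y : F | y != 0]).
  apply/allP => y; rewrite mem_enum => /all_roots; rewrite negbK => /eqP yn1.
  by rewrite /root !hornerE yn1 subrr.
have: 'X^n - 1 != 0 :> {poly F} by rewrite -size_poly_eq0 size_XnsubC.
apply: contraR; rewrite -ltnNge => n_lt.
apply/eqP/(roots_geq_poly_eq0 roots (enum_uniq _)).
by rewrite size_XnsubC // -cardE cardC1.
Qed.

Lemma exists_norm1_neq1 (F : finFieldType) q : #|F| = (q ^ 2)%N ->
  exists2 nu : F, nu != 1 & nu ^+ q.+1 = 1.
Proof.
move=> cardF; have q_gt1 : (1 < q)%N.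
  by have := card_finNzRing_gt1 F; rewrite cardF; case: q {cardF} => [|[|q]].
have cardF1 : #|F|.-1 = (q.-1 * q.+1)%N by rewrite cardF (expnS q 1) expn1; nia.
have q1_gt0 : (0 < q.-1)%N by lia.
have q1_lt : (q.-1 < #|F|.-1)%N by rewrite cardF1; nia.
have [y y_neq0 yq] := exists_nonroot_Xn_sub1 q1_gt0 q1_lt.
exists (y ^+ q.-1) => //; rewrite -exprM -cardF1.
apply: (mulIf y_neq0); rewrite mul1r -exprSr prednK ?expf_card //.
exact: ltnW (card_finNzRing_gt1 F).
Qed.

Section Examples.
Variables (F : finFieldType) (q : nat).
Hypotheses (q_gt0 : (0 < q)%N) (cardF : #|F| = (q ^ 2)%N) (two0 : (2 : F) = 0).

Lemma mem_slopes_product (p1 p2 r1 r2 m : F) :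
  (m \in slopes q (p1 * r1) (p2 * r2) (p1 * r2 + p2 * r1)) =
  ((p1 + p2 * m == 0) || (r1 + r2 * m == 0)) && (1 + m ^+ q.+1 == 0).
Proof.
rewrite inE -mulf_eq0; congr ((_ == 0) && _); ring.
Qed.

Lemma monic_factor_eq0 (m0 m : F) : (- m0 + 1 * m == 0) = (m == m0).
Proof. by rewrite mul1r addrC subr_eq0. Qed.

Lemma hermitian_slope1 : 1 + 1 ^+ q.+1 = 0 :> F.
Proof. by rewrite expr1n -mulr2n. Qed.

Lemma not_hermitian_slope0 : 1 + 0 ^+ q.+1 != 0 :> F.
Proof. by rewrite expr0n addr0 oner_neq0. Qed.

Lemma slopes_monic_product (m1 m2 : F) :
  slopes q (- m1 * - m2) (1 * 1) (- m1 * 1 + 1 * - m2) =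
  [set m | ((m == m1) || (m == m2)) && (1 + m ^+ q.+1 == 0)].
Proof. by apply/setP => m; rewrite mem_slopes_product !monic_factor_eq0 inE. Qed.

Definition Cinf_case_occurs (quadric : ('rV[F]_4 -> F) -> Prop) (shape : {set 'rV[F]_4} -> Prop) :=
  exists a b c d e f : F, [/\ irreducible_quadric (quadF a b c d e f),
    quadric (quadF a b c d e f) & shape (Cinf q a b c d e f)].

Lemma cone_one_point_occurs : Cinf_case_occurs (@quadratic_cone F) (@one_point F).
Proof.
exists (- 0 * - 0), (1 * 1), (- 0 * 1 + 1 * - 0), 0, 0, 0; split.
- by apply: irreducible_quadF; rewrite mul1r oner_neq0 orbT.
- exact: quadratic_cone_square.
apply: Cinf_one_point => //; rewrite slopes_monic_product; apply/setP => m.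
by rewrite !inE orbb; case: eqP => [->|] //=; apply/negbTE/not_hermitian_slope0.
Qed.

Lemma cone_one_line_occurs : Cinf_case_occurs (@quadratic_cone F) (points_on_one_line q).
Proof.
exists (- 1 * - 1), (1 * 1), (- 1 * 1 + 1 * - 1), 0, 0, 0; split.
- by apply: irreducible_quadF; rewrite mul1r oner_neq0 orbT.
- exact: quadratic_cone_square.
apply: (@Cinf_one_line _ _ _ _ _ _ _ _ q_gt0 cardF 1).
rewrite slopes_monic_product; apply/setP => m.
by rewrite !inE orbb; case: eqP => [->|] //=; rewrite hermitian_slope1 eqxx.
Qed.

Lemma hyperbolic_one_point_occurs : Cinf_case_occurs (@hyperbolic_quadric F) (@one_point F).
Proof.
exists (1 * 0), (0 * 1), (1 * 1 + 0 * 0), 0, 0, 0; split.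
- by apply: irreducible_quadF; rewrite !mulr0 !mulr1 addr0 oner_neq0 orbT.
- by apply: hyperbolic_quadric_product; rewrite mulr1 mulr0 subr0 oner_neq0.
apply: Cinf_one_point => //; apply/setP => m.
rewrite mem_slopes_product inE mul0r addr0 oner_eq0 mul1r add0r /=.
by case: eqP => [->|] //=; apply/negbTE/not_hermitian_slope0.
Qed.

Lemma hyperbolic_quadric_monic_product (m1 m2 : F) : m1 != m2 ->
  hyperbolic_quadric (quadF (- m1 * - m2) (1 * 1) (- m1 * 1 + 1 * - m2) 0 0 0).
Proof.
by move=> m12; apply: hyperbolic_quadric_product; rewrite mulr1 mul1r opprK addrC subr_eq0 eq_sym.
Qed.

Lemma hyperbolic_one_line_occurs : Cinf_case_occurs (@hyperbolic_quadric F) (points_on_one_line q).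
Proof.
exists (- 0 * - 1), (1 * 1), (- 0 * 1 + 1 * - 1), 0, 0, 0; split.
- by apply: irreducible_quadF; rewrite mul1r oner_neq0 orbT.
- by apply: hyperbolic_quadric_monic_product; rewrite eq_sym oner_neq0.
apply: (@Cinf_one_line _ _ _ _ _ _ _ _ q_gt0 cardF 1).
rewrite slopes_monic_product; apply/setP => m.
rewrite !inE; case: (eqVneq m 1) => [->|_]; first by rewrite hermitian_slope1 eqxx orbT.
by case: eqP => [->|] //=; apply/negbTE/not_hermitian_slope0.
Qed.

Lemma hyperbolic_two_lines_occurs :
  Cinf_case_occurs (@hyperbolic_quadric F) (points_on_two_lines q).
Proof.
have [nu nu_neq1 nuq] := exists_norm1_neq1 cardF.
exists (- 1 * - nu), (1 * 1), (- 1 * 1 + 1 * - nu), 0, 0, 0; split.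
- by apply: irreducible_quadF; rewrite mul1r oner_neq0 orbT.
- by apply: hyperbolic_quadric_monic_product; rewrite eq_sym.
apply: (@Cinf_two_lines _ _ _ _ _ _ _ _ q_gt0 cardF 1 nu); first by rewrite eq_sym.
rewrite slopes_monic_product; apply/setP => m; rewrite !inE.
case: (eqVneq m 1) => [->|_]; first by rewrite hermitian_slope1 eqxx.
by case: (eqVneq m nu) => [->|] //=; rewrite nuq -mulr2n two0 eqxx.
Qed.

End Examples.

Lemma card_pow2_char2 (F : finFieldType) n : #|F| = (2 ^ n)%N -> (2 : F) = 0.
Proof. by move=> cardF; apply: pcharf0; apply: card_finPcharP cardF _. Qed.

Theorem lemma2 (F : finFieldType) (h q : nat) :
  q = (2 ^ h)%N -> #|F| = (q ^ 2)%N ->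
  (forall a b c d e f : F,
     irreducible_quadric (quadF a b c d e f) ->
     (quadratic_cone (quadF a b c d e f) ->
        one_point (Cinf q a b c d e f) \/ points_on_one_line q (Cinf q a b c d e f)) /\
     (hyperbolic_quadric (quadF a b c d e f) ->
        [\/ one_point (Cinf q a b c d e f),
            points_on_one_line q (Cinf q a b c d e f)
          | points_on_two_lines q (Cinf q a b c d e f)]))
  /\
  (exists a b c d e f : F, [/\ irreducible_quadric (quadF a b c d e f),
       quadratic_cone (quadF a b c d e f) & one_point (Cinf q a b c d e f)]) /\
  (exists a b c d e f : F, [/\ irreducible_quadric (quadF a b c d e f),
       quadratic_cone (quadF a b c d e f) & points_on_one_line q (Cinf q a b c d e f)]) /\
  (exists a b c d e f : F, [/\ irreducible_quadric (quadF a b c d e f),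
       hyperbolic_quadric (quadF a b c d e f) & one_point (Cinf q a b c d e f)]) /\
  (exists a b c d e f : F, [/\ irreducible_quadric (quadF a b c d e f),
       hyperbolic_quadric (quadF a b c d e f) & points_on_one_line q (Cinf q a b c d e f)]) /\
  (exists a b c d e f : F, [/\ irreducible_quadric (quadF a b c d e f),
       hyperbolic_quadric (quadF a b c d e f) & points_on_two_lines q (Cinf q a b c d e f)]).
Proof.
move=> q_pow2 cardF.
have two0 : (2 : F) = 0 by apply: (@card_pow2_char2 _ (h * 2)); rewrite cardF q_pow2 -expnM.
have q_gt0 : (0 < q)%N by rewrite q_pow2 expn_gt0.
split.
  move=> a b c d e f irr; split; first exact: Cinf_quadratic_cone.
  by move=> _; apply: Cinf_irreducible_quadric.
split; first exact: cone_one_point_occurs.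
split; first exact: cone_one_line_occurs.
split; first exact: hyperbolic_one_point_occurs.
split; first exact: hyperbolic_one_line_occurs.
exact: hyperbolic_two_lines_occurs.
Qed.
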